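(* Let $d\ge3$, let $I\subset\mathbb{R}$ be an open interval and $V\subset\mathbb{R}^{d-1}$ an open connected set, and let $\psi\in C^\infty(I\times V)$ satisfy $\mathrm{rank}\,\nabla^2_y\partial_t\psi(t;y)=d-1$ for all $(t,y)\in I\times V$. If $c\in C^\infty(I\times V)$ satisfies $\partial_t^2\nabla_y^2\psi(t;y)=c(t;y)\,\partial_t\nabla^2_y\psi(t;y)$ on $I\times V$, then $c(t;y)$ does not depend on $y$, i.e. $c(t;y)=c(t)$ for some function $c$ on $I$.
   Context: $\nabla^2_y$ denotes the Hessian in the variables $y\in\mathbb{R}^{d-1}$. *)

From HB Require Import structures.
From mathcomp Require Import all_boot all_order all_algebra.
From mathcomp Require Import all_classical all_reals all_analysis.
Set Implicit Arguments. Unset Strict Implicit. Unset Printing Implicit Defensive.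
Import Order.TTheory GRing.Theory Num.Theory.
Import numFieldNormedType.Exports.
Local Open Scope classical_set_scope.
Local Open Scope ring_scope.

Section PartialDerivatives.
Variables (R : realType) (n : nat).

Definition fun2 := R -> 'rV[R]_n -> R.

Definition pdt (f : fun2) : fun2 := fun t y => derive (fun s : R => f s y) t 1.

Definition pdy (i : 'I_n) (f : fun2) : fun2 :=
  fun t y => derive (fun z : 'rV[R]_n => f t z) y (delta_mx 0 i).

Inductive pop := PDt | PDy of 'I_n.

Definition apply_pop (o : pop) (f : fun2) : fun2 :=
  match o with PDt => pdt f | PDy i => pdy i f end.

(* iterated partial derivative (rightmost operator applied first) *)
Fixpoint iter_pd (ops : seq pop) (f : fun2) : fun2 :=
  match ops with [::] => f | o :: ops' => apply_pop o (iter_pd ops' f) end.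

Definition smooth_on (I : set R) (V : set 'rV[R]_n) (f : fun2) : Prop :=
  forall (ops : seq pop) (t : R) (y : 'rV[R]_n), I t -> V y ->
    let g := iter_pd ops f in
    [/\ {for (t, y), continuous (fun p : R * 'rV[R]_n => g p.1 p.2)},
        derivable (fun s : R => g s y) t 1 &
        forall i : 'I_n, derivable (fun z : 'rV[R]_n => g t z) y (delta_mx 0 i)].

Definition hess_y (f : fun2) (t : R) (y : 'rV[R]_n) : 'M[R]_n :=
  \matrix_(i, j) pdy i (pdy j f) t y.

Definition dtk_hess_y (k : nat) (f : fun2) (t : R) (y : 'rV[R]_n) : 'M[R]_n :=
  \matrix_(i, j) iter k pdt (pdy i (pdy j f)) t y.

End PartialDerivatives.

(* Write [H = nabla_y^2 d_t psi], invertible by the rank hypothesis.  Since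
   mixed partials of smooth functions commute (Schwarz), differentiating
   [d_t H_ij = c H_ij] in [y_k] and subtracting the same identity with [i] and
   [k] exchanged leaves [d_k c * H_ij = d_i c * H_kj] for all [i, j, k].  As
   there are at least two indices, invertibility of [H] forces
   [nabla_y c = 0], and [c] is then constant in [y] on the connected set [V]. *)

From HB Require Import structures.
From mathcomp Require Import all_boot all_order all_algebra.
From mathcomp Require Import all_classical all_reals all_analysis.
From mathcomp Require Import lra zify.
Import Order.TTheory GRing.Theory Num.Theory.
Import numFieldNormedType.Exports.
Local Open Scope classical_set_scope.
Local Open Scope ring_scope.

Section Schwarz.
Variable R : realType.

Lemma MVT_step (f : R -> R) (a h : R) : 0 < h ->
  (forall s, a <= s <= a + h -> derivable f s 1) ->
  exists2 s, a <= s <= a + h & f (a + h) - f a = derive f s 1 * h.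
Proof.
move=> h0 df.
have := @MVT_segment R f (fun x => derive f x 1) a (a + h).
rewrite addrAC subrr add0r; apply.
- by rewrite lerDl ltW.
- move=> x; rewrite in_itv /= => /andP[ax xb]; apply: derivableP; apply: df.
  by rewrite !ltW.
- apply: derivable_within_continuous => x; rewrite in_itv /= => /andP[ax xb].
  by apply: df; rewrite ax xb.
Qed.

Lemma second_difference_MVT (g : R -> R -> R) (a b h : R) : 0 < h ->
  (forall s r, a <= s <= a + h -> b <= r <= b + h ->
     derivable (g ^~ r) s 1 /\ derivable (fun r' => derive (g ^~ r') s 1) r 1) ->
  exists s r, [/\ a <= s <= a + h, b <= r <= b + h &
    g (a + h) (b + h) - g (a + h) b - g a (b + h) + g a b =
    h * h * derive (fun r' => derive (g ^~ r') s 1) r 1].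
Proof.
move=> h0 dg.
pose phi s := g s (b + h) - g s b.
have bb : b <= b <= b + h by rewrite lexx lerDl ltW.
have bh : b <= b + h <= b + h by rewrite lexx lerDl ltW.
have [s sI es] : exists2 s, a <= s <= a + h &
    phi (a + h) - phi a = derive phi s 1 * h.
  apply: MVT_step => // s sI.
  by apply: derivableB; [exact: (dg _ _ sI bh).1 | exact: (dg _ _ sI bb).1].
have [r rI er] : exists2 r, b <= r <= b + h &
    derive (g ^~ (b + h)) s 1 - derive (g ^~ b) s 1 =
    derive (fun r' => derive (g ^~ r') s 1) r 1 * h.
  by apply: (@MVT_step (fun r' => derive (g ^~ r') s 1)) => // r rI;
    exact: (dg _ _ sI rI).2.
exists s, r; split => //.
rewrite /phi deriveB in es; last 2 first.
- exact: (dg _ _ sI bh).1.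
- exact: (dg _ _ sI bb).1.
move: es; rewrite er; lra.
Qed.

Lemma nbhs_pair_box (P : R * R -> Prop) (a b : R) :
  (\forall p \near (a, b), P p) -> exists2 e, 0 < e &
    forall s r, `|s - a| < e -> `|r - b| < e -> P (s, r).
Proof.
move=> /nbhs_ballP [e e0 He]; exists e => // s r sa rb; apply: He.
by split => /=; rewrite /ball /= distrC.
Qed.

Lemma dist_lt_half_absurd (x y z : R) :
  `|x - z| < `|x - y| / 2 -> `|y - z| < `|x - y| / 2 -> False.
Proof. by have := ler_distD z x y; rewrite [`|z - y|]distrC; lra. Qed.

(* The second difference of [g] over a small square is [h^2] times either
   mixed partial at some point of the square; continuity at [(a, b)] then
   makes the two partials agree. *)
Lemma schwarz_plane (g : R -> R -> R) (a b e : R) : 0 < e ->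
  (forall s r, `|s - a| < e -> `|r - b| < e ->
   [/\ derivable (g ^~ r) s 1, derivable (g s) r 1,
       derivable (fun r' => derive (g ^~ r') s 1) r 1 &
       derivable (fun s' => derive (g s') r 1) s 1]) ->
  {for (a, b), continuous (fun p : R * R =>
     derive (fun r' => derive (g ^~ r') p.1 1) p.2 1)} ->
  {for (a, b), continuous (fun p : R * R =>
     derive (fun s' => derive (g s') p.2 1) p.1 1)} ->
  derive (fun r' => derive (g ^~ r') a 1) b 1 =
  derive (fun s' => derive (g s') b 1) a 1.
Proof.
move=> e0 dg C1 C2.
set D1 := derive _ b 1; set D2 := derive _ a 1.
have [//|neq] := eqVneq D1 D2.
have ep : 0 < `|D1 - D2| / 2 by rewrite divr_gt0 // normr_gt0 subr_eq0.
have [d1 d10 near1] := nbhs_pair_box _ _ _ ((cvgrPdist_lt _ _).1 C1 _ ep).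
have [d2 d20 near2] := nbhs_pair_box _ _ _ ((cvgrPdist_lt _ _).1 C2 _ ep).
pose m := Num.min e (Num.min d1 d2); pose h := m / 2.
have m0 : 0 < m by rewrite !lt_min e0 d10 d20.
have h0 : 0 < h by rewrite divr_gt0.
have hm : h < m by rewrite /h; lra.
have inside x y : x <= y <= x + h -> [/\ `|y - x| < e, `|y - x| < d1 & `|y - x| < d2].
  move=> /andP[xy yxh]; have : `|y - x| < m by rewrite ger0_norm ?subr_ge0 //; lra.
  by rewrite !lt_min => /and3P[].
have dgh s r : a <= s <= a + h -> b <= r <= b + h -> [/\ derivable (g ^~ r) s 1,
    derivable (g s) r 1, derivable (fun r' => derive (g ^~ r') s 1) r 1 &
    derivable (fun s' => derive (g s') r 1) s 1].
  by move=> /inside[se _ _] /inside[re _ _]; exact: dg.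
have [s [r [/inside[_ sd1 _] /inside[_ rd1 _] E1]]] :=
  @second_difference_MVT g a b h h0 (fun s r sI rI =>
    let: And4 ds _ dsr _ := dgh s r sI rI in conj ds dsr).
have [r' [s' [/inside[_ _ rd2] /inside[_ _ sd2] E2]]] :=
  @second_difference_MVT (fun r s => g s r) b a h h0 (fun r s rI sI =>
    let: And4 _ dr _ drs := dgh s r sI rI in conj dr drs).
set X := derive (fun r' => derive (g ^~ r') s 1) r 1.
set Y := derive (fun s'' => derive (g s'') r' 1) s' 1.
have same : Y = X.
  move: E2 => /= E2; move: E1.
  rewrite (addrAC (g (a + h) (b + h))) E2; apply: mulfI.
  by rewrite mulf_neq0 // gt_eqF.
exfalso; apply: (@dist_lt_half_absurd D1 D2 X); first exact: near1 _ _ sd1 rd1.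
by rewrite -same; exact: near2 _ _ sd2 rd2.
Qed.

End Schwarz.

Section SchwarzDirectional.
Variables (R : realType) (W : normedModType R).

Lemma difference_quotient_line (f : W -> R) (a v : W) (r0 : R) :
  (fun h : R => h^-1 *: (((fun r => f (a + r *: v)) \o shift r0) (h *: 1)
                         - f (a + r0 *: v))) =
  (fun h : R => h^-1 *: ((f \o shift (a + r0 *: v)) (h *: v) - f (a + r0 *: v))).
Proof.
apply/funext => h /=; congr (_ *: (f _ - _)).
by rewrite scalerDl [h%:A]mulr1 addrCA addrA.
Qed.

Lemma derivable_line (f : W -> R) (a v : W) (r : R) :
  derivable (fun r' : R => f (a + r' *: v)) r 1 = derivable f (a + r *: v) v.
Proof. by rewrite /derivable difference_quotient_line. Qed.

Lemma derive_line (f : W -> R) (a v : W) (r : R) :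
  derive (fun r' : R => f (a + r' *: v)) r 1 = derive f (a + r *: v) v.
Proof. by rewrite /derive difference_quotient_line. Qed.

Definition plane (p u w : W) (sr : R * R) : W := p + sr.1 *: u + sr.2 *: w.

Lemma plane0 (p u w : W) : plane p u w (0, 0) = p.
Proof. by rewrite /plane /= !scale0r !addr0. Qed.

Lemma cvg_plane (p u w : W) : plane p u w @ (0, 0) --> p.
Proof.
rewrite -[X in _ --> X](plane0 p u w).
apply: cvgD; last by apply: cvgZr_tmp; exact: cvg_snd.
by apply: cvgD; [exact: cvg_cst | apply: cvgZr_tmp; exact: cvg_fst].
Qed.

Lemma plane_swap (p u w : W) s r : plane p u w (s, r) = p + r *: w + s *: u.
Proof. by rewrite /plane addrAC. Qed.

Lemma derivable_plane1 (F : W -> R) (p u w : W) s r :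
  derivable (fun s' : R => F (plane p u w (s', r))) s 1 = derivable F (plane p u w (s, r)) u.
Proof. by under eq_fun do rewrite plane_swap; rewrite derivable_line plane_swap. Qed.

Lemma derive_plane1 (F : W -> R) (p u w : W) s r :
  derive (fun s' : R => F (plane p u w (s', r))) s 1 = derive F (plane p u w (s, r)) u.
Proof. by under eq_fun do rewrite plane_swap; rewrite derive_line plane_swap. Qed.

Lemma derivable_plane2 (F : W -> R) (p u w : W) s r :
  derivable (fun r' : R => F (plane p u w (s, r'))) r 1 = derivable F (plane p u w (s, r)) w.
Proof. exact: (derivable_line F (p + s *: u) w r). Qed.

Lemma derive_plane2 (F : W -> R) (p u w : W) s r :
  derive (fun r' : R => F (plane p u w (s, r'))) r 1 = derive F (plane p u w (s, r)) w.
Proof. exact: (derive_line F (p + s *: u) w r). Qed.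

Lemma schwarz (f : W -> R) (p u w : W) :
  (\forall q \near p, [/\ derivable f q u, derivable f q w,
     derivable (fun q' => derive f q' u) q w &
     derivable (fun q' => derive f q' w) q u]) ->
  {for p, continuous (fun q => derive (fun q' => derive f q' u) q w)} ->
  {for p, continuous (fun q => derive (fun q' => derive f q' w) q u)} ->
  derive (fun q => derive f q u) p w = derive (fun q => derive f q w) p u.
Proof.
move=> near_p C1 C2; pose P := plane p u w; pose g s r := f (P (s, r)).
have Duw : (fun sr : R * R => derive (fun r' => derive (g ^~ r') sr.1 1) sr.2 1) =
    (fun q => derive (fun q' => derive f q' u) q w) \o P.
  apply/funext => -[s r] /=; under eq_fun do rewrite derive_plane1.
  exact: (derive_plane2 (fun q => derive f q u)).
have Dwu : (fun sr : R * R => derive (fun s' => derive (g s') sr.2 1) sr.1 1) =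
    (fun q => derive (fun q' => derive f q' w) q u) \o P.
  apply/funext => -[s r] /=; under eq_fun do rewrite derive_plane2.
  exact: (derive_plane1 (fun q => derive f q w)).
have near0 : \forall sr \near ((0 : R), (0 : R)), [/\ derivable f (P sr) u,
    derivable f (P sr) w, derivable (fun q => derive f q u) (P sr) w &
    derivable (fun q => derive f q w) (P sr) u] := cvg_plane p u w _ near_p.
have [e e0 {}near0] := @nbhs_pair_box R _ 0 0 near0.
have := @schwarz_plane R g 0 0 e e0.
move: (congr1 (@^~ (0, 0)) Duw) (congr1 (@^~ (0, 0)) Dwu) => /= -> ->.
rewrite /P plane0; apply.
- move=> s r s0 r0; have [d1 d2 d3 d4] := near0 s r s0 r0.
  rewrite /g /= derivable_plane1 derivable_plane2.
  split; [exact: d1 | exact: d2 | |].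
  + under eq_fun do rewrite derive_plane1.
    by move: d3; rewrite -(derivable_plane2 (fun q => derive f q u)) => d3; exact: d3.
  + under eq_fun do rewrite derive_plane2.
    by move: d4; rewrite -(derivable_plane1 (fun q => derive f q w)) => d4; exact: d4.
- rewrite Duw /prop_for /continuous_at /comp /P plane0.
  exact: cvg_comp (cvg_plane p u w) C1.
- rewrite Dwu /prop_for /continuous_at /comp /P plane0.
  exact: cvg_comp (cvg_plane p u w) C2.
Qed.

End SchwarzDirectional.

Section PartialOperators.
Variables (R : realType) (n : nat).

Definition pair_fun (F : fun2 R n) : R * 'rV[R]_n -> R := fun q => F q.1 q.2.

Definition pop_dir (o : pop n) : R * 'rV[R]_n :=
  if o is PDy i then (0, delta_mx 0 i) else (1, 0).

Lemma difference_quotient_pop o F t y :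
  (fun h : R => h^-1 *: ((pair_fun F \o shift (t, y)) (h *: pop_dir o) - F t y)) =
  if o is PDy i then
    fun h : R => h^-1 *: (((F t) \o shift y) (h *: delta_mx 0 i) - F t y)
  else fun h : R => h^-1 *: (((F ^~ y) \o shift t) (h *: 1) - F t y).
Proof. by case: o => [|i]; apply/funext => h /=; rewrite /pair_fun /= scaler0 add0r. Qed.

Lemma apply_pop_derive o F t y :
  apply_pop o F t y = derive (pair_fun F) (t, y) (pop_dir o).
Proof. by rewrite /derive difference_quotient_pop; case: o. Qed.

Lemma derivable_pair_fun o F t y :
  derivable (pair_fun F) (t, y) (pop_dir o) =
  if o is PDy i then derivable (F t) y (delta_mx 0 i) else derivable (F ^~ y) t 1.
Proof. by rewrite /derivable difference_quotient_pop; case: o. Qed.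

Lemma pair_fun_apply_pop o F :
  pair_fun (apply_pop o F) = fun q => derive (pair_fun F) q (pop_dir o).
Proof. by apply/funext => -[t y]; rewrite /pair_fun /= apply_pop_derive. Qed.

Lemma pdyM (a b : fun2 R n) k t y :
  derivable (a t) y (delta_mx 0 k) -> derivable (b t) y (delta_mx 0 k) ->
  pdy k (fun t y => a t y * b t y) t y = pdy k a t y * b t y + a t y * pdy k b t y.
Proof.
move=> da db; rewrite /pdy (_ : (fun z => a t z * b t z) = a t * b t) //.
by rewrite deriveM // addrC mulrC.
Qed.

End PartialOperators.

Arguments pair_fun {R n}.
Arguments pop_dir {R n}.

Definition pop_to_option n (o : pop n) : option 'I_n :=
  if o is PDy i then Some i else None.

Definition option_to_pop n (oi : option 'I_n) : pop n :=
  if oi is Some i then PDy i else PDt n.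

Lemma pop_to_optionK n : cancel (@pop_to_option n) (@option_to_pop n).
Proof. by case. Qed.

HB.instance Definition _ n := Equality.copy (pop n) (can_type (@pop_to_optionK n)).

Section SmoothCalculus.
Context {R : realType} {n : nat} {I : set R} {V : set 'rV[R]_n}.
Hypotheses (oI : open I) (oV : open V).

Lemma near_open_box t y : I t -> V y -> \forall q \near (t, y), I q.1 /\ V q.2.
Proof.
move=> It Vy; exists (I, V); first by split; [exact: oI | exact: oV].
by move=> [a b] [].
Qed.

Lemma smooth_derivable f ops (o : pop n) q : smooth_on I V f -> I q.1 -> V q.2 ->
  derivable (pair_fun (iter_pd ops f)) q (pop_dir o).
Proof.
case: q => t y f_smooth It Vy; rewrite derivable_pair_fun.
by have [_ dt dy] := f_smooth ops t y It Vy; case: o.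
Qed.

Lemma smooth_continuous f ops q : smooth_on I V f -> I q.1 -> V q.2 ->
  {for q, continuous (pair_fun (iter_pd ops f))}.
Proof. by case: q => t y f_smooth It Vy; have [] := f_smooth ops t y It Vy. Qed.

Lemma apply_pop_eq_on {F G : fun2 R n} (o : pop n) {t y} :
  (forall t y, I t -> V y -> F t y = G t y) -> I t -> V y ->
  apply_pop o F t y = apply_pop o G t y.
Proof.
move=> FG It Vy; rewrite !apply_pop_derive; apply: near_eq_derive.
near=> q; have [Iq Vq] : I q.1 /\ V q.2 by near: q; exact: near_open_box.
by rewrite /pair_fun FG.
Unshelve. all: by end_near.
Qed.

Lemma apply_popC f ops (o1 o2 : pop n) t y : smooth_on I V f -> I t -> V y ->
  apply_pop o1 (apply_pop o2 (iter_pd ops f)) t y =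
  apply_pop o2 (apply_pop o1 (iter_pd ops f)) t y.
Proof.
move=> f_smooth It Vy; rewrite !apply_pop_derive !pair_fun_apply_pop.
apply: schwarz.
- near=> q; have [Iq Vq] : I q.1 /\ V q.2 by near: q; exact: near_open_box.
  split; [exact: smooth_derivable | exact: smooth_derivable | |].
  + by rewrite -pair_fun_apply_pop; exact: (smooth_derivable _ (o2 :: ops)).
  + by rewrite -pair_fun_apply_pop; exact: (smooth_derivable _ (o1 :: ops)).
- by rewrite -!pair_fun_apply_pop; exact: (smooth_continuous _ (o1 :: o2 :: ops)).
- by rewrite -!pair_fun_apply_pop; exact: (smooth_continuous _ (o2 :: o1 :: ops)).
Unshelve. all: by end_near.
Qed.

Lemma iter_pd_cat_cons f s1 s2 (o : pop n) t y : smooth_on I V f -> I t -> V y ->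
  iter_pd (s1 ++ o :: s2) f t y = iter_pd (o :: s1 ++ s2) f t y.
Proof.
move=> f_smooth; elim: s1 t y => [//|o1 s1 IH] t y It Vy /=.
by rewrite (apply_pop_eq_on _ IH It Vy); exact: apply_popC.
Qed.

Lemma iter_pd_perm {f} {s1 s2 : seq (pop n)} {t y} :
  smooth_on I V f -> perm_eq s1 s2 -> I t -> V y ->
  iter_pd s1 f t y = iter_pd s2 f t y.
Proof.
move=> f_smooth; elim: s1 s2 t y => [|o s1 IH] s2 t y.
  by rewrite perm_sym => /perm_nilP ->.
move=> s12 It Vy; have o_s2 : o \in s2 by rewrite -(perm_mem s12) mem_head.
move: s12; case/splitPr: o_s2 => p1 p2 s12.
have {}s12 : perm_eq s1 (p1 ++ p2).
  by move: s12; rewrite -[(o :: p2)]cat1s perm_sym perm_catCA perm_sym perm_cons.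
rewrite iter_pd_cat_cons //=; exact: (apply_pop_eq_on _ (fun t y => IH _ t y s12) It Vy).
Qed.

End SmoothCalculus.

Section ZeroGradient.
Context {R : realType}.

Lemma derive_eq0_segment (g : R -> R) a b : a <= b ->
  (forall x, a <= x <= b -> derivable g x 1 /\ derive g x 1 = 0) -> g a = g b.
Proof.
move=> ab dg; have [] := @MVT_segment R g (fun x => derive g x 1) a b ab.
- move=> x; rewrite in_itv /= => /andP[ax xb]; apply: derivableP.
  by apply: (dg x _).1; rewrite !ltW.
- apply: derivable_within_continuous => x; rewrite in_itv /= => xI.
  exact: (dg x xI).1.
move=> x; rewrite in_itv /= => xI.
by rewrite (dg x xI).2 mul0r => /eqP; rewrite subr_eq0 => /eqP.
Qed.

Lemma derive_eq0_line (W : normedModType R) (f : W -> R) (q v : W) (r : R) :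
  (forall x, `|x| <= `|r| -> derivable f (q + x *: v) v /\ derive f (q + x *: v) v = 0) ->
  f (q + r *: v) = f q.
Proof.
move=> df; pose g (x : R) := f (q + x *: v).
have dg x : `|x| <= `|r| -> derivable g x 1 /\ derive g x 1 = 0.
  by move=> /df[d D]; rewrite /g derivable_line derive_line.
rewrite -/(g r) (_ : f q = g 0); last by rewrite /g scale0r addr0.
have [r0|r0] := lerP 0 r.
- apply/esym/derive_eq0_segment => // x /andP[x0 xr]; apply: dg.
  by rewrite (ger0_norm x0) (ger0_norm r0).
- apply: derive_eq0_segment; first exact: ltW.
  move=> x /andP[rx x0]; apply: dg.
  by rewrite (ler0_norm x0) (ler0_norm (ltW r0)) lerN2.
Qed.

(* Walk from [z] to [w] changing one coordinate at a time: balls of the sup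
   norm are boxes, so every intermediate segment stays in the ball. *)
Lemma ball_partials_eq0_const n (f : 'rV[R]_n -> R) (z w : 'rV[R]_n) e :
  (forall y, ball z e y -> forall k,
     derivable f y (delta_mx 0 k) /\ derive f y (delta_mx 0 k) = 0) ->
  ball z e w -> f w = f z.
Proof.
move=> df zw; have [e0 zw_coord] := zw.
pose zm m : 'rV[R]_n := \row_l (if (l < m)%N then w 0 l else z 0 l).
have step m (k : 'I_n) : nat_of_ord k = m -> f (zm m.+1) = f (zm m).
  move=> km; set dk := w 0 k - z 0 k.
  have -> : zm m.+1 = zm m + dk *: delta_mx 0 k.
    apply/rowP => l; rewrite !mxE /= -km ltnS leq_eqVlt val_eqE.
    case: (eqVneq l k) => [->|lk]; last by rewrite /= mulr0 addr0.
    by rewrite ltnn mulr1 /dk addrC subrK.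
  apply: derive_eq0_line => x xd; apply: df; split => // i j.
  rewrite (ord1 i) !mxE /ball /= -km.
  case: (eqVneq j k) => [->|jk].
  - rewrite ltnn mulr1 opprD addrA subrr sub0r normrN.
    by apply: le_lt_trans xd _; rewrite /dk distrC; exact: zw_coord.
  - rewrite mulr0 addr0; case: ifP => _; last by rewrite subrr normr0.
    exact: zw_coord.
have zm_z m : (m <= n)%N -> f (zm m) = f z.
  elim: m => [_|m IH mn].
    by congr f; apply/rowP => l; rewrite !mxE.
  by rewrite (step m (Ordinal mn)) // IH // ltnW.
rewrite -(zm_z n (leqnn n)); congr f.
by apply/rowP => l; rewrite !mxE ltn_ord.
Qed.

Lemma connected_locally_const (T : topologicalType) (X : Type) (V : set T) (f : T -> X) :
  connected V -> (forall z, V z -> \forall w \near z, V w /\ f w = f z) ->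
  forall x y, V x -> V y -> f y = f x.
Proof.
move=> cV loc x y Vx Vy.
pose B := [set w | V w /\ f w = f x].
suff BV : B = V by have [] : B y by rewrite BV.
apply: cV; first by exists x.
- exists (interior B); first exact: open_interior.
  apply/seteqP; split => [z [Vz fz]|z [Vz /interior_subset //]].
  split => //; apply: filterS (loc z Vz) => w [Vw fw]; split => //.
  by rewrite fw.
- exists (~` interior [set w | V w /\ f w <> f x]).
    by rewrite closedC; exact: open_interior.
  apply/seteqP; split => [z [Vz fz]|z [Vz nz]].
    by split => // /interior_subset [_ []].
  split => //; apply: contrapT => fz; apply: nz.
  by apply: filterS (loc z Vz) => w [Vw fw]; split => //; rewrite fw.
Qed.

Lemma partials_eq0_const {n} {V : set 'rV[R]_n} (f : 'rV[R]_n -> R) :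
  open V -> connected V ->
  (forall y, V y -> forall k,
     derivable f y (delta_mx 0 k) /\ derive f y (delta_mx 0 k) = 0) ->
  forall x y, V x -> V y -> f y = f x.
Proof.
move=> oV cV df; apply: connected_locally_const cV _ => z Vz.
have /nbhs_ballP[e e0 zeV] := oV z Vz.
apply/nbhs_ballP; exists e => // w zw; split; first exact: zeV.
by apply: ball_partials_eq0_const zw => y zy; apply: df; exact: zeV.
Qed.

End ZeroGradient.

(* For [i != k] the row combination [v k * A_i - v i * A_k] vanishes, and
   row freeness then forces its [i]-th coefficient [v k] to vanish. *)
Lemma row_free_cross_eq0 {F : fieldType} {n} (A : 'M[F]_n) (v : 'I_n -> F) :
  (1 < n)%N -> row_free A -> (forall i j k, v k * A i j = v i * A k j) ->
  forall k, v k = 0.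
Proof.
move=> n_gt1 freeA cross k; apply/eqP/negPn/negP => vk0.
have [i ik] : exists i : 'I_n, i != k.
  case: n A v cross k vk0 freeA n_gt1 => [|[|m]] // A v _ k _ _ _.
  case: (eqVneq k ord0) => [->|kn0]; last by exists ord0; rewrite eq_sym.
  by exists (lift ord0 ord0).
pose u : 'rV[F]_n := v k *: delta_mx 0 i - v i *: delta_mx 0 k.
have uA : u *m A = 0.
  by rewrite mulmxBl -!scalemxAl -!rowE; apply/rowP => j; rewrite !mxE cross subrr.
have := mulmx_free_eq0 u freeA; rewrite uA eqxx => /esym/eqP/rowP/(_ i).
rewrite !mxE eqxx (negbTE ik) /= eqxx mulr1 mulr0 subr0 => /eqP.
by rewrite (negbTE vk0).
Qed.

Section HessianEquation.
Context {R : realType} {n : nat} {I : set R} {V : set 'rV[R]_n} {psi c : fun2 R n}.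
Hypotheses (oI : open I) (oV : open V).
Hypotheses (psi_smooth : smooth_on I V psi) (c_smooth : smooth_on I V c).
Hypothesis hess_eq : forall t y, I t -> V y ->
  dtk_hess_y 2 psi t y = c t y *: dtk_hess_y 1 psi t y.

Lemma hess_eq_coef i j t y : I t -> V y ->
  iter_pd [:: PDt n; PDt n; PDy i; PDy j] psi t y =
  c t y * iter_pd [:: PDt n; PDy i; PDy j] psi t y.
Proof.
by move=> It Vy; have := congr1 (fun M : 'M[R]_n => M i j) (hess_eq t y It Vy); rewrite !mxE.
Qed.

Lemma hess_y_pdt_cross t y i j k : I t -> V y ->
  pdy k c t y * hess_y (pdt psi) t y i j = pdy i c t y * hess_y (pdt psi) t y k j.
Proof.
move=> It Vy.
have hess_pdt l : hess_y (pdt psi) t y l j = iter_pd [:: PDt n; PDy l; PDy j] psi t y.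
  rewrite mxE; change (iter_pd [:: PDy l; PDy j; PDt n] psi t y =
                       iter_pd [:: PDt n; PDy l; PDy j] psi t y).
  by apply: (iter_pd_perm oI oV psi_smooth _ It Vy); apply/permP => p /=; lia.
have dk_eq l m : iter_pd [:: PDy m; PDt n; PDt n; PDy l; PDy j] psi t y =
    pdy m c t y * iter_pd [:: PDt n; PDy l; PDy j] psi t y +
    c t y * iter_pd [:: PDy m; PDt n; PDy l; PDy j] psi t y.
  apply: etrans (apply_pop_eq_on oI oV (PDy m) (hess_eq_coef l j) It Vy) _.
  have [_ _ dc] := c_smooth [::] t y It Vy.
  have [_ _ dE] := psi_smooth [:: PDt n; PDy l; PDy j] t y It Vy.
  exact: (@pdyM R n c (iter_pd [:: PDt n; PDy l; PDy j] psi) m t y (dc m) (dE m)).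
have swap5 : iter_pd [:: PDy k; PDt n; PDt n; PDy i; PDy j] psi t y =
             iter_pd [:: PDy i; PDt n; PDt n; PDy k; PDy j] psi t y.
  by apply: (iter_pd_perm oI oV psi_smooth _ It Vy); apply/permP => p /=; lia.
have swap4 : iter_pd [:: PDy k; PDt n; PDy i; PDy j] psi t y =
             iter_pd [:: PDy i; PDt n; PDy k; PDy j] psi t y.
  by apply: (iter_pd_perm oI oV psi_smooth _ It Vy); apply/permP => p /=; lia.
rewrite !hess_pdt; move: (dk_eq i k) (dk_eq k i); rewrite swap5 swap4 => ->.
exact: addIr.
Qed.

Hypotheses (n_gt1 : (1 < n)%N)
  (hess_free : forall t y, I t -> V y -> row_free (hess_y (pdt psi) t y)).

Lemma pdy_coef_eq0 t y k : I t -> V y -> pdy k c t y = 0.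
Proof.
move=> It Vy; apply: (row_free_cross_eq0 _ (fun k => pdy k c t y) n_gt1 (hess_free t y It Vy) _ k).
by move=> i j l; exact: hess_y_pdt_cross.
Qed.

Lemma coef_const_in_y : connected V ->
  exists c0 : R -> R, forall t y, I t -> V y -> c t y = c0 t.
Proof.
move=> cV; have [[y0 Vy0]|V0] := pselect (exists y0, V y0); last first.
  by exists (fun=> 0) => t y _ Vy; case: V0; exists y.
exists (fun t => c t y0) => t y It Vy.
apply: (partials_eq0_const (c t) oV cV _ y0 y Vy0 Vy) => y' Vy' k.
have [_ _ dc] := c_smooth [::] t y' It Vy'.
by split; [exact: dc | exact: pdy_coef_eq0].
Qed.

End HessianEquation.

Theorem corollary4p2 (R : realType) (d : nat) (I : set R) (V : set 'rV[R]_(d.-1))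
  (psi c : R -> 'rV[R]_(d.-1) -> R) :
  (2 < d)%N ->
  open I -> is_interval I ->
  open V -> connected V ->
  smooth_on I V psi ->
  (forall t y, I t -> V y -> \rank (hess_y (pdt psi) t y) = d.-1) ->
  smooth_on I V c ->
  (forall t y, I t -> V y ->
     dtk_hess_y 2 psi t y = c t y *: dtk_hess_y 1 psi t y) ->
  exists c0 : R -> R, forall t y, I t -> V y -> c t y = c0 t.
Proof.
move=> d_gt2 oI _ oV cV psi_smooth rank_hess c_smooth hess_eq.
have n_gt1 : (1 < d.-1)%N by rewrite ltn_predRL.
have hess_free t y : I t -> V y -> row_free (hess_y (pdt psi) t y).
  by move=> It Vy; rewrite /row_free rank_hess.
exact: (coef_const_in_y oI oV psi_smooth c_smooth hess_eq n_gt1 hess_free cV).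
Qed.
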